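(* Let $r,n,\delta\ge 2$ be natural numbers, let $m := \max\{\binom{rn-1}{r-1}n^2, \delta\}$ and $N := \binom{m-1}{n-1}$. Let $G$ be the graph with vertices $v_{i,j,k}$ for $i\in[n]$, $j\in[N]$, $k\in[m]$, and vertices $s_{i,X}$ for $i\in[n]$ and $X\subseteq[m]$ with $|X|=n$, whose edges are: $v_{i,j,k}v_{i',j',k'}$ whenever $i\neq i'$ and $k=k'$; and $s_{i,X}v_{i,j,k}$ whenever $k\in X$ (for all $j\in[N]$). Then $\chi_r(G)=rn$.
   Context: $[t]=\{1,\dots,t\}$. There are no other edges in $G$ than those listed. A proper $k$-colouring of a graph $G$ is a map $c\colon V(G)\to[k]$ with $c(u)\neq c(v)$ for every edge $uv$. An $r$-dynamic $k$-colouring is a proper $k$-colouring $c$ such that for every vertex $v$, $|c(N(v))|\ge\min\{r,d(v)\}$, where $N(v)$ is the neighbourhood and $d(v)$ the degree of $v$. $\chi_r(G)$ is the least $k$ for which $G$ has an $r$-dynamic $k$-colouring. *)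

From mathcomp Require Import all_boot.
Set Implicit Arguments. Unset Strict Implicit. Unset Printing Implicit Defensive.

Section Dyn.
Variables (T : finType) (e : rel T).

Definition nbhd (v : T) : {set T} := [set u | e v u].
Definition deg (v : T) : nat := #|nbhd v|.

Definition proper_col (k : nat) (c : T -> 'I_k) : Prop :=
  forall u v, e u v -> c u <> c v.

Definition dynamic_col (r k : nat) (c : T -> 'I_k) : Prop :=
  proper_col c /\ forall v, minn r (deg v) <= #|c @: nbhd v|.

Definition has_dynamic_col (r k : nat) : Prop :=
  exists c : T -> 'I_k, dynamic_col r c.

Definition chi_dyn_eq (r x : nat) : Prop :=
  has_dynamic_col r x /\ forall k, has_dynamic_col r k -> x <= k.
End Dyn.

Definition mpar (r n delta : nat) : nat :=
  maxn ('C(r * n - 1, r - 1) * n ^ 2) delta.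
Definition Npar (r n delta : nat) : nat := 'C(mpar r n delta - 1, n - 1).

(* vertices: inl (i, j, k) = v_{i,j,k}; inr (i, X) = s_{i,X} *)
Definition Vtx (n N m : nat) : finType :=
  (('I_n * 'I_N * 'I_m) + ('I_n * {X : {set 'I_m} | #|X| == n}))%type.

Definition Gedge (n N m : nat) : rel (Vtx n N m) :=
  fun a b =>
    match a, b with
    | inl x, inl y => (x.1.1 != y.1.1) && (x.2 == y.2)
    | inr s, inl y => (s.1 == y.1.1) && (y.2 \in val s.2)
    | inl x, inr s => (s.1 == x.1.1) && (x.2 \in val s.2)
    | inr _, inr _ => false
    end.

(* Upper bound: colour v_{i,j,k} by (j mod r, i) and s_{i,X} by (0, i+1 mod n).
   Vertices v with the same k and different i get different second components,
   and every vertex sees r neighbours v_{i',t,k}, t < r <= N, of distinct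
   colours.
   Lower bound: let C_i^k be the set of colours of the v_{i,j,k}. As s_{i,X} has
   degree >= N >= r, the classes C_i^k with k in X carry >= r colours together,
   so for each i and each set S of r - 1 colours fewer than n indices k have
   C_i^k inside S. With K < rn colours, at most n (n-1) C(K, r-1) < m indices k
   have some |C_i^k| < r; at any other k the n classes C_i^k are pairwise
   disjoint (the v_{i,j,k} with fixed k form a complete n-partite graph), which
   forces rn <= K. *)

From mathcomp Require Import all_boot zify.
Set Implicit Arguments. Unset Strict Implicit. Unset Printing Implicit Defensive.

Section CardSubsets.
Variable T : finType.
Implicit Types A B S : {set T}.

Lemma exists_subset_card A t :
  t <= #|A| -> exists2 B : {set T}, B \subset A & #|B| = t.
Proof.
move=> le_tA; exists [set x in take t (enum A)].
  by apply/subsetP => x; rewrite inE => /mem_take; rewrite mem_enum.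
rewrite cardsE; have /card_uniqP -> := take_uniq t (enum_uniq A).
by rewrite size_takel // -cardE.
Qed.

Lemma exists_supset_card A t :
  #|A| <= t <= #|T| -> exists2 S : {set T}, A \subset S & #|S| = t.
Proof.
case/andP=> le_At le_tT.
have [B sBAc cardB] : exists2 B : {set T}, B \subset ~: A & #|B| = t - #|A|.
  by apply: exists_subset_card; have := cardsC A; lia.
exists (A :|: B); first exact: subsetUl.
have AB0 : A :&: B = set0.
  by apply/disjoint_setI0; rewrite disjoint_sym disjoints_subset.
by rewrite cardsU AB0 cards0 cardB; lia.
Qed.
End CardSubsets.

Section BigcupCard.
Variables (I T : finType) (F : I -> {set T}).

Lemma leq_card_bigcup (A : {pred I}) :
  #|\bigcup_(i in A) F i| <= \sum_(i in A) #|F i|.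
Proof.
elim/big_ind2: _ => // [|x X y Y le_Xx le_Yy]; first by rewrite cards0.
by rewrite (leq_trans (leq_card_setU X Y).1) ?leq_add.
Qed.

Lemma card_bigcup_disjoint (A : {pred I}) :
  {in A &, forall i j, i != j -> [disjoint F i & F j]} ->
  #|\bigcup_(i in A) F i| = \sum_(i in A) #|F i|.
Proof.
rewrite -!big_enum; have : {subset enum A <= A} by move=> i; rewrite mem_enum.
elim: (enum A) (enum_uniq A) => [|a s IHs] /=; first by rewrite !big_nil cards0.
case/andP=> s'a uniq_s sub_as disjF.
have sub_s : {subset s <= A} by move=> i s_i; apply: sub_as; rewrite inE s_i orbT.
have Aa : a \in A by apply: sub_as; rewrite inE eqxx.
rewrite !big_cons -IHs //.
apply/eqP; rewrite (leq_card_setU _ _).2 bigcup_seq.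
apply: bigcup_disjoint => j s_j; apply: disjF => //; first exact: sub_s.
by apply: contraNneq s'a => ->.
Qed.

End BigcupCard.

Lemma leq_bin n k : 0 < k < n -> n <= 'C(n, k).
Proof.
elim: n k => [|n IHn] [|[|k]] //=; first by rewrite bin1.
move=> lt_kn; rewrite binS.
have := IHn k.+1 lt_kn; have : 0 < 'C(n, k.+2) by rewrite bin_gt0.
lia.
Qed.

Lemma ordS_neq n (i : 'I_n) : 1 < n -> ordS i != i.
Proof.
move=> lt1n; rewrite -val_eqE /=; have lt_in := ltn_ord i.
case: (ltnP i.+1 n) => [lt_Sin | le_nSi]; first by rewrite modn_small // gtn_eqF.
have -> : i.+1 = n by lia.
by rewrite modnn; lia.
Qed.

Lemma leq_card_imset_inj (I T U : finType) (f : T -> U) (g : I -> T)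
    (A : {set T}) :
  injective (f \o g) -> (forall t, g t \in A) -> #|I| <= #|f @: A|.
Proof.
move=> inj_fg gA; rewrite -cardsT -(card_imset _ inj_fg).
apply/subset_leq_card/subsetP => _ /imsetP [t _ ->].
exact: imset_f.
Qed.

Lemma exists_index_all_large (I J U : finType) (C : I -> J -> {set U}) n r :
  r <= #|U| -> #|I| * ('C(#|U|, r) * n.-1) < #|J| ->
  (forall i (X : {set J}), #|X| = n -> r < #|\bigcup_(k in X) C i k|) ->
  exists k, forall i, r < #|C i k|.
Proof.
move=> le_rU count_bound large_unions.
pose draws := [set S : {set U} | #|S| == r].
pose below i (S : {set U}) := [set k | C i k \subset S].
have card_below i S : S \in draws -> #|below i S| <= n.-1.
  rewrite inE => /eqP card_S; rewrite leqNgt; apply/negP => lt_n_below.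
  have [X sub_X card_X] := @exists_subset_card _ (below i S) n ltac:(lia).
  have := large_unions i X card_X; rewrite ltnNge -card_S.
  apply/negP/negPn/subset_leq_card/bigcupsP => k /(subsetP sub_X).
  by rewrite inE.
pose small := [set k | [exists i, #|C i k| <= r]].
have sub_small : small \subset \bigcup_(i in I) \bigcup_(S in draws) below i S.
  apply/subsetP => k; rewrite inE => /existsP [i le_Cr].
  have [S sub_S card_S] := @exists_supset_card _ (C i k) r ltac:(lia).
  apply/bigcupP; exists i => //.
  by apply/bigcupP; exists S; rewrite inE ?card_S.
have /card_gt0P [k] : 0 < #|~: small|.
  suff : #|small| < #|J| by have := cardsC small; lia.
  apply: leq_ltn_trans (subset_leq_card sub_small) _.
  apply: leq_ltn_trans _ count_bound; apply: leq_trans (leq_card_bigcup _ _) _.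
  rewrite -sum_nat_const; apply: leq_sum => i _.
  apply: leq_trans (leq_card_bigcup _ _) _.
  rewrite -card_draws -sum_nat_const; apply: leq_sum => S; exact: card_below.
rewrite !inE negb_exists => /forallP large_k.
by exists k => i; rewrite ltnNge large_k.
Qed.

Section DynamicColouring.
Variables (T : finType) (e : rel T).

Lemma has_dynamic_col_card (C : finType) (c : T -> C) r :
  (forall u v, e u v -> c u != c v) ->
  (forall v, minn r (deg e v) <= #|c @: nbhd e v|) ->
  has_dynamic_col e r #|C|.
Proof.
move=> proper_c rich_c; exists (enum_rank \o c); split=> [u v /proper_c | v].
  by apply: contraNnot => /enum_rank_inj ->.
by rewrite imset_comp card_imset //; exact: enum_rank_inj.
Qed.

End DynamicColouring.

Section UpperBound.
Variables (n N m r : nat).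
Hypotheses (n_gt1 : 1 < n) (r_gt0 : 0 < r) (le_rN : r <= N).
Local Notation G := (@Gedge n N m).

Definition pair_colouring (x : Vtx n N m) : 'I_r * 'I_n :=
  match x with
  | inl (i, j, _) => (Ordinal (ltn_pmod j r_gt0), i)
  | inr (i, _) => (Ordinal r_gt0, ordS i)
  end.

Lemma pair_colouring_proper u v : G u v -> pair_colouring u != pair_colouring v.
Proof.
case: u v => [[[i j] k] | [i X]] [[[i' j'] k'] | [i' X']] //= /andP [edge _];
  rewrite xpair_eqE negb_and.
- by rewrite edge orbT.
- by rewrite (eqP edge) (eq_sym i) ordS_neq ?orbT.
- by rewrite (eqP edge) ordS_neq ?orbT.
Qed.

Lemma pair_colouring_rich v : r <= #|pair_colouring @: nbhd G v|.
Proof.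
have [i0 [k0 nbr_class]] : exists i0 k0,
    forall t : 'I_r, G v (inl (i0, widen_ord le_rN t, k0)).
  case: v => [[[i j] k] | [i [X card_X]]].
    by exists (ordS i), k => t /=; rewrite eqxx andbT eq_sym ordS_neq.
  have [k0 X_k0] : exists k0, k0 \in X.
    by apply/card_gt0P; rewrite (eqP card_X); lia.
  by exists i, k0 => t /=; rewrite eqxx X_k0.
rewrite -{1}(card_ord r).
apply: leq_card_imset_inj (fun t => inl (i0, widen_ord le_rN t, k0)) _ _ _.
  by move=> t t' [] /=; rewrite !modn_small // => /val_inj.
by move=> t; rewrite inE.
Qed.

Lemma Gedge_has_dynamic_col : has_dynamic_col G r (r * n).
Proof.
have -> : r * n = #|{: 'I_r * 'I_n}| by rewrite card_prod !card_ord.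
apply: has_dynamic_col_card pair_colouring_proper _ => v.
exact: leq_trans (geq_minl _ _) (pair_colouring_rich v).
Qed.

End UpperBound.

Section LowerBound.
Variables (n N m K : nat) (c : Vtx n N m -> 'I_K).
Local Notation G := (@Gedge n N m).

Definition colour_class (i : 'I_n) (k : 'I_m) : {set 'I_K} :=
  [set c (inl (i, j, k)) | j : 'I_N].

Lemma colour_class_disjoint k i i' :
  proper_col G c -> i != i' -> [disjoint colour_class i k & colour_class i' k].
Proof.
move=> proper_c ne_ii'; rewrite -setI_eq0; apply/eqP/setP => x; rewrite !inE.
apply/negP => /andP [/imsetP [j _ ->] /imsetP [j' _]].
by apply: proper_c; rewrite /= ne_ii' eqxx.
Qed.

Lemma colour_class_bigcup r i (X : {set 'I_m}) :
  r <= N -> dynamic_col G r c -> #|X| = n ->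
  r <= #|\bigcup_(k in X) colour_class i k|.
Proof.
move=> le_rN [_ dyn_c] card_X.
have [k0 X_k0] : exists k0, k0 \in X.
  by apply/card_gt0P; rewrite card_X; have := ltn_ord i; lia.
have card_X' : #|X| == n by rewrite card_X.
pose s : Vtx n N m := inr (i, exist _ X card_X').
have deg_s : r <= deg G s.
  apply: leq_trans le_rN _.
  have := @leq_card_imset_inj _ _ _ id (fun j => inl (i, j, k0)) (nbhd G s).
  rewrite card_ord imset_id => -> //; first by move=> j j' [].
  by move=> j; rewrite inE /= eqxx X_k0.
have := dyn_c s; rewrite (minn_idPl deg_s) => /leq_trans; apply.
apply/subset_leq_card/subsetP => _ /imsetP [[[[i' j] k] | t] + ->].
  rewrite inE /= => /andP [/eqP <- X_k].
  by apply/bigcupP; exists k => //; exact: imset_f.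
by rewrite inE.
Qed.

End LowerBound.

Lemma Gedge_dynamic_col_ge n N m r K :
  0 < r -> 0 < n -> r <= N -> 'C(r * n - 1, r - 1) * n ^ 2 <= m ->
  has_dynamic_col (@Gedge n N m) r K -> r * n <= K.
Proof.
move=> r_gt0 n_gt0 le_rN le_m [c dyn_c].
have rich i (X : {set 'I_m}) :
    #|X| = n -> r <= #|\bigcup_(k in X) colour_class c i k|.
  by move=> card_X; exact: (colour_class_bigcup i le_rN dyn_c card_X).
have le_nm : n <= m.
  have : 0 < 'C(r * n - 1, r - 1) by rewrite bin_gt0; nia.
  move: le_m; rewrite expnS expn1; nia.
have le_rK : r <= K.
  have [X _ card_X] :=
    @exists_subset_card _ [set: 'I_m] n ltac:(by rewrite cardsT card_ord).
  apply: leq_trans (rich (Ordinal n_gt0) X card_X) _.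
  by rewrite -[K in _ <= K]card_ord max_card.
rewrite leqNgt; apply/negP => lt_K_rn.
have [k large_k] : exists k, forall i, r.-1 < #|colour_class c i k|.
  apply: (exists_index_all_large (n := n)); rewrite ?card_ord.
  - lia.
  - have : 'C(K, r.-1) <= 'C(r * n - 1, r - 1).
      by rewrite !subn1; apply: leq_bin2l; lia.
    have : 0 < 'C(K, r.-1) by rewrite bin_gt0; lia.
    move: le_m; rewrite expnS expn1; nia.
  - by move=> i X /rich; rewrite prednK.
have disj : {in 'I_n &, forall i i', i != i' ->
    [disjoint colour_class c i k & colour_class c i' k]}.
  by move=> i i' _ _; apply: colour_class_disjoint; case: dyn_c.
have : r * n <= \sum_(i in 'I_n) #|colour_class c i k|.
  rewrite mulnC -[n in n * r]card_ord -sum_nat_const; apply: leq_sum => i _.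
  by rewrite -(prednK r_gt0); exact: large_k.
rewrite -(card_bigcup_disjoint disj) => /leq_trans /(_ (max_card _)).
by rewrite card_ord; lia.
Qed.

Theorem lemma2p3 (r n delta : nat) :
  2 <= r -> 2 <= n -> 2 <= delta ->
  chi_dyn_eq (@Gedge n (Npar r n delta) (mpar r n delta)) r (r * n).
Proof.
move=> r_gt1 n_gt1 _; rewrite /Npar; set m := mpar r n delta.
have le_m : 'C(r * n - 1, r - 1) * n ^ 2 <= m by apply: leq_maxl.
have le_rn_m : r * n - 1 <= m.
  apply: leq_trans (leq_trans (leq_pmulr _ _) le_m); last by rewrite expn_gt0; lia.
  by apply: leq_bin; apply/andP; split; nia.
have le_rN : r <= 'C(m - 1, n - 1).
  by apply: leq_trans (leq_bin _); [nia | apply/andP; split; nia].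
split=> [|K]; first by apply: Gedge_has_dynamic_col; lia.
by apply: Gedge_dynamic_col_ge; lia.
Qed.
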